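(* Let $q$ be odd, let $n\ge3$ and $1\le b\le n-2$, and let $C_1,C_2$ be $[n,n-1]_q$-linear codes that are both $b$-symbol MDS codes. Suppose there exist $\mathbf{x}=(x_1,\dots,x_n)\in C_1\cap C_2$ and a hole $H\in\mathbb{H}(\chi_1(\mathbf{x}))$ such that $w_b(\mathbf{x})=d_b(C_1)$, $|H|\ge b-1$, and $\{1,n\}\cap H\ne\emptyset$. Then the $[2n,2n-2]_q$-linear code $C=\{[\mathbf{u}+\mathbf{v},\mathbf{u}-\mathbf{v}]:\mathbf{u}\in C_1,\mathbf{v}\in C_2\}$ is a $b$-symbol AMDS code, i.e., $d_b(C)=b+1$.
   Context: For $\mathbf{x}\in\mathbb{F}_q^L$ and $1\le b\le L$, $\chi_b(\mathbf{x})=\{i:(x_i,\dots,x_{i+b-1})\ne\mathbf{0}\}$ (indices mod $L$), $w_b(\mathbf{x})=|\chi_b(\mathbf{x})|$, $d_b(C)=\min_{\mathbf{0}\ne\mathbf{c}\in C}w_b(\mathbf{c})$; $\chi_1$ is the Hamming support. For $J\subseteq\{1,\dots,n\}$, a hole of $J$ of size $h\ge1$ is a set $\{a+1,\dots,a+h\}$ disjoint from $J$ (indices mod $n$) with $a,a+h+1\in J$; $\mathbb{H}(J)$ is the set of holes of $J$. An $[n,k]_q$-linear code $C$ is $b$-symbol MDS if $d_b(C)=\min\{n-k+b,n\}$ and $b$-symbol AMDS if $d_b(C)=\min\{n-k+b,n\}-1$. *)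

(* Codes over a finite field F are F-subspaces of row vectors 'rV[F]_L.
   Coordinates are indexed 0..L-1 (paper: 1..L); all definitions are cyclic, so this is a shift. *)
From HB Require Import structures.
From mathcomp Require Import all_boot all_order all_algebra all_field.
Set Implicit Arguments. Unset Strict Implicit. Unset Printing Implicit Defensive.
Import GRing.Theory.
Local Open Scope ring_scope.

Section Codes.
Variable F : finFieldType.

Definition chi_b (L b : nat) (x : 'rV[F]_L) : {set 'I_L} :=
  [set i : 'I_L | [exists j : 'I_L, (j < b)%N &&
      [exists k : 'I_L, (val k == (val i + val j) %% L)%N && (x 0 k != 0)]]].

Definition w_b (L b : nat) (x : 'rV[F]_L) : nat := #|chi_b b x|.

(* minimum b-symbol weight of nonzero codewords (L if the code is zero) *)
Definition d_b (L b : nat) (C : {vspace 'rV[F]_L}) : nat :=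
  \big[minn/L]_(c : 'rV[F]_L | (c \in C) && (c != 0)) w_b b c.

Definition is_hole (L : nat) (J H : {set 'I_L}) : Prop :=
  exists (a : 'I_L) (h : nat), [/\ (1 <= h)%N, a \in J,
    [exists k : 'I_L, (val k == (val a + h + 1) %% L)%N && (k \in J)],
    H = [set i : 'I_L | [exists t : 'I_L, (1 <= val t <= h)%N &&
                                    (val i == (val a + val t) %% L)%N]]
    & [disjoint H & J]].

Definition bsym_MDS (L b : nat) (C : {vspace 'rV[F]_L}) : Prop :=
  d_b b C = minn (L - \dim C + b) L.

Definition bsym_AMDS (L b : nat) (C : {vspace 'rV[F]_L}) : Prop :=
  d_b b C = (minn (L - \dim C + b) L).-1.

(* the set {[u+v, u-v] : u \in C1, v \in C2} and the linear code it spans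
   (it is already a subspace, so the span adds nothing) *)
Definition pm_set (n : nat) (C1 C2 : {vspace 'rV[F]_n}) : {set 'rV[F]_(n + n)} :=
  [set row_mx (u + v) (u - v) | u in C1, v in C2].

Definition pm_code (n : nat) (C1 C2 : {vspace 'rV[F]_n}) : {vspace 'rV[F]_(n + n)} :=
  <<enum (pm_set C1 C2)>>%VS.

End Codes.

From HB Require Import structures.
From mathcomp Require Import all_boot all_order all_algebra all_field zify.
Set Implicit Arguments. Unset Strict Implicit. Unset Printing Implicit Defensive.
Import GRing.Theory.

(* Since 2 is invertible, (u, v) |-> [u + v, u - v] is injective on C1 x C2, so
   C has dimension 2n - 2.  A nonzero codeword of C with two nonzero coordinates
   has b-symbol weight at least b + 1; one with a single nonzero coordinate
   would yield a vector of C1 of Hamming weight one, whose b-symbol weight b is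
   below d_b(C1) = b + 1.  Conversely [2x, 0] is a codeword of weight at most
   w_b(x) = b + 1: since the hole of x at the wrap-around point has length at
   least b - 1, no length-b window meets the support of x on both sides of that
   point, so the windows at i and i + n of [x, 0] are never both nonzero, and
   reducing window positions mod n maps the nonzero windows of [x, 0]
   injectively to nonzero windows of x. *)

Lemma modn_ltn2 (L y : nat) : y < L + L -> y %% L = if y < L then y else y - L.
Proof.
move=> hy; case: ltnP => [|hLy]; first exact: modn_small.
by rewrite -{1}(subnK hLy) modnDr modn_small // ltn_subLR.
Qed.

Lemma modn_eq_ltn2 (L y1 y2 : nat) : y1 < y2 -> y2 < L + L -> y1 %% L = y2 %% L ->
  y2 = y1 + L.
Proof.
move=> lt12 lt2; rewrite (modn_ltn2 (ltn_trans lt12 lt2)) (modn_ltn2 lt2).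
by case: (ltnP y1 L); case: (ltnP y2 L); lia.
Qed.

Section CyclicDistance.
Variable L : nat.
Implicit Types i k s t : 'I_L.

(* [cdist i k] is the number of cyclic forward steps from [i] to [k], and
   [win b k] is the set of starting points of the length-[b] windows containing [k]. *)
Definition cdist i k : nat := (k + L - i) %% L.

Lemma cdist_lt i k : cdist i k < L.
Proof. exact/ltn_pmod/(leq_ltn_trans (leq0n i) (ltn_ord i)). Qed.

Lemma cdistP i k j : j < L -> (cdist i k == j) = (val k == (i + j) %% L).
Proof.
have hiL := ltnW (ltn_ord i); have hkL := ltn_ord k.
move=> hj; rewrite /cdist; apply/eqP/eqP => [<-|->].
  by rewrite modnDmr subnKC ?modnDr ?modn_small // (leq_trans hiL) ?leq_addl.
have -> : (i + j) %% L + L - i = (i + j) %% L + (L - i) by lia.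
rewrite modnDml; have -> : i + j + (L - i) = j + L by lia.
by rewrite modnDr modn_small.
Qed.

Lemma cdistK i k : val k = (i + cdist i k) %% L.
Proof. by apply/eqP; rewrite -cdistP ?cdist_lt. Qed.

Lemma cdist_eq0 i k : (cdist i k == 0) = (i == k).
Proof.
rewrite cdistP ?(leq_ltn_trans (leq0n i)) // addn0 modn_small //.
by apply/eqP/eqP => [/val_inj|->].
Qed.

Lemma cdistnn i : cdist i i = 0.
Proof. by apply/eqP; rewrite cdist_eq0. Qed.

Lemma cdist_inj_l k : injective (cdist^~ k).
Proof.
move=> i1 i2 e; apply: val_inj => /=.
have := cdistP i1 k (cdist_lt i2 k); rewrite e eqxx {1}(cdistK i2 k) => /esym.
by rewrite eqn_modDr !modn_small // => /eqP.
Qed.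

Lemma cdist_add i t s : cdist i s = (cdist i t + cdist t s) %% L.
Proof.
apply/eqP; rewrite cdistP ?ltn_pmod ?(leq_ltn_trans (leq0n i)) //.
rewrite modnDmr addnA -modnDml.
by rewrite -cdistK -cdistK.
Qed.

Definition cdist_ord k i : 'I_L := Ordinal (cdist_lt i k).

Lemma cdist_ord_bij k : bijective (cdist_ord k).
Proof. by apply: injF_bij => i1 i2 /(congr1 val) /cdist_inj_l. Qed.

Lemma cdist_onto k e : e < L -> exists i, cdist i k = e.
Proof.
move=> he; have [g _ gK] := cdist_ord_bij k.
by exists (g (Ordinal he)); rewrite -[cdist _ _]/(val (cdist_ord k _)) gK.
Qed.

Definition win b k : {set 'I_L} := [set i | cdist i k < b].

Lemma card_win b k : b <= L -> #|win b k| = b.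
Proof.
move=> hbL; have -> : win b k = cdist_ord k @^-1: [set widen_ord hbL j | j : 'I_b].
  apply/setP => i; rewrite !inE; apply/idP/imsetP => [hi|[j _ /(congr1 val) /= ->]] //.
  by exists (Ordinal hi); last exact: val_inj.
rewrite card_preimset; last exact: bij_inj (cdist_ord_bij k).
by rewrite card_imset ?card_ord // => j1 j2 /(congr1 val) /= /val_inj.
Qed.

End CyclicDistance.

Section SymbolWeight.
Variables (F : finFieldType) (L : nat).
Implicit Types (x : 'rV[F]_L) (b : nat).
Local Open Scope ring_scope.

Lemma chi_bE b x : (b <= L)%N -> chi_b b x = \bigcup_(k | x 0 k != 0) win b k.
Proof.
move=> hbL; apply/setP => i; rewrite inE; apply/existsP/bigcupP.
  move=> [j /andP [hj /existsP [k /andP [/eqP hk hx]]]].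
  exists k; rewrite // inE.
  by have /eqP -> : cdist i k == j by rewrite cdistP // hk.
move=> [k hx]; rewrite inE => hi; exists (cdist_ord k i); rewrite hi /=.
by apply/existsP; exists k; rewrite hx -cdistK eqxx.
Qed.

Lemma in_chi_b1 x k : (k \in chi_b 1 x) = (x 0 k != 0).
Proof.
rewrite chi_bE ?(leq_ltn_trans (leq0n k)) //; apply/bigcupP/idP => [[k' hx]|hx].
  by rewrite inE ltnS leqn0 cdist_eq0 => /eqP ->.
by exists k; rewrite // inE ltnS leqn0 cdist_eq0.
Qed.

Lemma w_b1E x : w_b 1 x = (\sum_k (x 0%R k != 0%R))%N.
Proof.
rewrite /w_b -sum1_card big_mkcond /=.
by apply: eq_bigr => k _; rewrite in_chi_b1; case: (x 0 k != 0).
Qed.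

Lemma w_b1_eq0 x : (w_b 1 x == 0)%N = (x == 0).
Proof.
rewrite /w_b cards_eq0; apply/eqP/eqP => [x0|->].
  apply/rowP => k; rewrite mxE; apply/eqP.
  by rewrite -[_ == 0]negbK -in_chi_b1 x0 inE.
by apply/setP => k; rewrite in_chi_b1 inE mxE eqxx.
Qed.

Lemma chi_bZ b a x : a != 0 -> chi_b b (a *: x) = chi_b b x.
Proof.
move=> ha; apply/setP => i; rewrite !inE.
apply: eq_existsb => j; congr andb; apply: eq_existsb => k.
by rewrite mxE mulf_eq0 (negbTE ha).
Qed.

Lemma w_b_le_w_b1 b x : (w_b 1 x <= 1)%N -> (b <= L)%N -> (w_b b x <= b)%N.
Proof.
move=> hx1 hbL; rewrite /w_b chi_bE //.
have [s hs|x0] := pickP (fun k => x 0 k != 0); last first.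
  by rewrite big_pred0 ?cards0.
suff /subset_leq_card : \bigcup_(k | x 0 k != 0) win b k \subset win b s.
  by rewrite card_win.
apply/bigcupsP => k hk; move/card_le1P: hx1 => /(_ s).
by rewrite in_chi_b1 => /(_ hs k); rewrite in_chi_b1 hk => /esym/eqP ->.
Qed.

Lemma w_b_gt_w_b1 b x : (1 < w_b 1 x)%N -> (0 < b < L)%N -> (b < w_b b x)%N.
Proof.
move=> /card_gt1P [s [t [hs ht hst]]] /andP [hb hbL].
rewrite !in_chi_b1 in hs ht.
have [i hit his] : exists2 i, i \in win b t & i \notin win b s.
  have hd : cdist t s != 0%N by rewrite cdist_eq0 eq_sym.
  have [hbd|hdb] := leqP b (cdist t s).
    by exists t; rewrite !inE -?leqNgt // cdistnn.
  have [i hi] : exists i, cdist i t = (b - cdist t s)%N.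
    exact/cdist_onto/(leq_ltn_trans (leq_subr _ _) hbL).
  exists i; rewrite !inE ?hi; first by rewrite ltn_subrL lt0n hd.
  by rewrite -leqNgt (cdist_add i t) hi subnK ?(ltnW hdb) // modn_small.
have sub : i |: win b s \subset chi_b b x.
  rewrite chi_bE ?(ltnW hbL) // subUset sub1set; apply/andP; split.
    by apply/bigcupP; exists t.
  exact: (bigcup_sup s).
by move: (subset_leq_card sub); rewrite cardsU1 his card_win ?(ltnW hbL).
Qed.

Lemma d_b_le b (C : {vspace 'rV[F]_L}) c : c \in C -> c != 0 -> (d_b b C <= w_b b c)%N.
Proof.
move=> hc hc0; rewrite /d_b -minEnat.
by apply: (Order.TotalTheory.bigmin_le_cond L (w_b b)); rewrite hc hc0.
Qed.

Lemma d_b_ge b (C : {vspace 'rV[F]_L}) m : (m <= L)%N ->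
  (forall c, c \in C -> c != 0 -> (m <= w_b b c)%N) -> (m <= d_b b C)%N.
Proof.
move=> hmL hC; rewrite /d_b; elim/big_ind: _ => // [v1 v2 h1 h2|c /andP []].
  by rewrite leq_min h1 h2.
exact: hC.
Qed.

End SymbolWeight.

Lemma two_neq0_oddcard (F : finFieldType) : odd #|F| -> (2%:R != 0 :> F)%R.
Proof.
move=> hodd; apply/negP => /eqP h2.
have pc : 2 \in [pchar F]%R by apply/andP; split => //; apply/eqP.
have /= := card_pprimeChar pc; set k := logn _ _ => hF.
have hF1 : 1 < #|F| by rewrite (cardD1 0%R) (cardD1 1%R) !inE (oner_neq0 F).
by move: hodd hF1; rewrite hF; case: k {hF} => [|k] //; rewrite expnS oddM.
Qed.

Lemma w_b1_row_mx (F : finFieldType) m n (y : 'rV[F]_m) (z : 'rV[F]_n) :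
  w_b 1 (row_mx y z) = w_b 1 y + w_b 1 z.
Proof.
rewrite !w_b1E big_split_ord /=.
by congr (_ + _); apply: eq_bigr => k _; rewrite (row_mxEl, row_mxEr).
Qed.

Section PlusMinus.
Variables (F : finFieldType) (n : nat) (C1 C2 : {vspace 'rV[F]_n}).
Implicit Types u v : 'rV[F]_n.
Local Open Scope ring_scope.

Definition row_dup : 'Hom('rV[F]_n, 'rV[F]_(n + n)) := linfun (mulmxr (row_mx 1%:M 1%:M)).
Definition row_dupN : 'Hom('rV[F]_n, 'rV[F]_(n + n)) := linfun (mulmxr (row_mx 1%:M (- 1%:M))).

Lemma row_dupE u : row_dup u = row_mx u u.
Proof. by rewrite lfunE /= mul_mx_row mulmx1. Qed.

Lemma row_dupNE v : row_dupN v = row_mx v (- v).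
Proof. by rewrite lfunE /= mul_mx_row mulmxN mulmx1. Qed.

Lemma row_dup_pm u v : row_mx (u + v) (u - v) = row_dup u + row_dupN v.
Proof. by rewrite row_dupE row_dupNE add_row_mx. Qed.

Lemma pm_codeE : pm_code C1 C2 = (row_dup @: C1 + row_dupN @: C2)%VS.
Proof.
apply/eqP; rewrite eqEsubv; apply/andP; split.
  apply/span_subvP => w; rewrite mem_enum => /imset2P [u v hu hv ->].
  by rewrite row_dup_pm memv_add ?memv_img.
apply/subvP => w /memv_addP [_ /memv_imgP [u hu ->] [_ /memv_imgP [v hv ->] ->]].
by rewrite -row_dup_pm memv_span // mem_enum; apply/imset2P; exists u v.
Qed.

Lemma pm_codeP c :
  reflect (exists2 u, u \in C1 & exists2 v, v \in C2 & c = row_mx (u + v) (u - v))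
          (c \in pm_code C1 C2).
Proof.
rewrite pm_codeE; apply: (iffP memv_addP).
  move=> [_ /memv_imgP [u hu ->] [_ /memv_imgP [v hv ->] ->]].
  by exists u => //; exists v; rewrite // row_dup_pm.
move=> [u hu [v hv ->]]; rewrite row_dup_pm.
by exists (row_dup u); rewrite ?memv_img //; exists (row_dupN v); rewrite ?memv_img.
Qed.

Lemma dim_pm_code : 2%:R != 0 :> F -> \dim (pm_code C1 C2) = (\dim C1 + \dim C2)%N.
Proof.
move=> h2.
have ker0 : lker row_dup = 0%VS.
  by apply/eqP/lker0P => u u'; rewrite !row_dupE => /eq_row_mx [].
have kerN0 : lker row_dupN = 0%VS.
  by apply/eqP/lker0P => u u'; rewrite !row_dupNE => /eq_row_mx [].
have disj : (row_dup @: C1 :&: row_dupN @: C2 = 0)%VS.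
  apply/eqP; rewrite -subv0; apply/subvP => w /memv_capP [/memv_imgP [u _ ->]].
  move=> /memv_imgP [v _]; rewrite row_dupE row_dupNE => /eq_row_mx [-> evu].
  have : 2%:R *: v = 0 by rewrite scaler_nat mulr2n {2}evu subrr.
  by move/eqP; rewrite scaler_eq0 (negbTE h2) memv0 => /eqP ->; rewrite row_mx0.
by rewrite pm_codeE dimv_disjoint_sum // !limg_dim_eq // ?ker0 ?kerN0 capv0.
Qed.

Lemma pm_w_b1_le1 u v : 2%:R != 0 :> F -> row_mx (u + v) (u - v) != 0 ->
  (w_b 1 (row_mx (u + v) (u - v)) <= 1)%N -> u != 0 /\ (w_b 1 u <= 1)%N.
Proof.
move=> h2 c0; rewrite w_b1_row_mx => hw.
have w0 : w_b 1 (0 : 'rV[F]_n) = 0%N by apply/eqP; rewrite w_b1_eq0.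
suff [hu hwu] : u + u != 0 /\ (w_b 1 (u + u) <= 1)%N.
  split; first by apply: contraNneq hu => ->; rewrite addr0.
  by rewrite -mulr2n -scaler_nat /w_b chi_bZ in hwu.
have [e|e] : u + v = 0 \/ u - v = 0.
  case: (eqVneq (u + v) 0) => [|huv]; [by left|right].
  by apply/eqP; rewrite -w_b1_eq0 -leqn0 -(leq_add2l (w_b 1 (u + v))) addn0;
     apply: leq_trans hw _; rewrite lt0n w_b1_eq0.
- rewrite -(addr0_eq e) subrr opprK w0 in c0 hw.
  by split => //; apply: contraNneq c0 => ->; rewrite row_mx0.
- rewrite -(subr0_eq e) subrr w0 addn0 in c0 hw.
  by split => //; apply: contraNneq c0 => ->; rewrite row_mx0.
Qed.

Lemma pm_code_d_b_gt b : 2%:R != 0 :> F -> (0 < b < n)%N -> (b < d_b b C1)%N ->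
  (b < d_b b (pm_code C1 C2))%N.
Proof.
move=> h2 /andP [hb hbn] hC1; apply: d_b_ge => [|c /pm_codeP [u hu [v hv ->]] c0].
  by rewrite ltn_addr.
case: (ltnP 1 (w_b 1 (row_mx (u + v) (u - v)))) => hw.
  by apply: w_b_gt_w_b1; rewrite // hb ltn_addr.
have [u0 hwu] := pm_w_b1_le1 h2 c0 hw.
have := leq_trans hC1 (d_b_le b hu u0).
by rewrite ltnNge w_b_le_w_b1 // ltnW.
Qed.

End PlusMinus.

Section WrapAround.
Variables (F : finFieldType) (n : nat).
Local Open Scope ring_scope.

Definition wrap_gap_geq b (x : 'rV[F]_n) : Prop :=
  forall p1 p2 : 'I_n, x 0 p1 != 0 -> x 0 p2 != 0 -> (p1 + b <= p2 + n)%N.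

Lemma chi_b_row_mx0P b (x : 'rV[F]_n) (i : 'I_(n + n)) : (b <= n + n)%N ->
  i \in chi_b b (row_mx x 0) -> exists2 p : 'I_n, x 0 p != 0 & (cdist i (lshift n p) < b)%N.
Proof.
move=> hbnn; rewrite chi_bE // => /bigcupP [k]; rewrite inE -(splitK k).
by case: (split k) => p /=; rewrite ?row_mxEl ?row_mxEr ?mxE ?eqxx // => hp hi; exists p.
Qed.

Lemma chi_b_row_mx0_antipodal b (x : 'rV[F]_n) (i1 i2 : 'I_(n + n)) :
  (b <= n)%N -> wrap_gap_geq b x ->
  i1 \in chi_b b (row_mx x 0) -> i2 \in chi_b b (row_mx x 0) -> val i2 <> (i1 + n)%N.
Proof.
move=> hbn hgap; have hbnn : (b <= n + n)%N by rewrite (leq_trans hbn) ?leq_addr.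
move=> /(chi_b_row_mx0P hbnn) [p1 hp1 h1] /(chi_b_row_mx0P hbnn) [p2 hp2 h2] e.
have e1 := cdistK i1 (lshift n p1); have e2 := cdistK i2 (lshift n p2).
move: hbn (ltn_ord i2) (ltn_ord p1) (ltn_ord p2) h1 h2 e1 e2 (hgap p1 p2 hp1 hp2).
rewrite /= e; move: (nat_of_ord i1) (nat_of_ord p1) (nat_of_ord p2) (cdist _ _) (cdist _ _).
(* The window at [a] meets [p1 = a + d1], the one at [a + n] meets [p2 = a + d2 - n]. *)
clear => a q1 q2 d1 d2 hbn ha hq1 hq2 hd1 hd2 e1 e2.
rewrite modn_small in e1; last lia.
rewrite modn_ltn2 in e2; last lia.
by move: e2; case: ltnP; lia.
Qed.

Lemma w_b_row_mx0_le b (x : 'rV[F]_n) : (b <= n)%N -> wrap_gap_geq b x ->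
  (w_b b (row_mx x (0 : 'rV[F]_n)) <= w_b b x)%N.
Proof.
move=> hbn hgap; have hbnn : (b <= n + n)%N by rewrite (leq_trans hbn) ?leq_addr.
have [n0|n_gt0] := posnP n.
  have card0 : #|'I_(n + n)| = 0%N by rewrite card_ord n0.
  by rewrite /w_b (leq_trans (max_card _)) // card0.
pose g (i : 'I_(n + n)) : 'I_n := Ordinal (ltn_pmod i n_gt0).
have cdist_g i p : cdist (g i) p = (cdist i (lshift n p) %% n)%N.
  apply/eqP; rewrite cdistP ?ltn_pmod //= modnDm.
  have -> : p = (lshift n p %% n)%N :> nat by rewrite modn_small //; exact: ltn_ord p.
  by rewrite {1}(cdistK i (lshift n p)) modn_dvdm // dvdn_add.
have sub : g @: chi_b b (row_mx x 0) \subset chi_b b x.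
  apply/subsetP => _ /imsetP [i /(chi_b_row_mx0P hbnn) [p hp hi] ->]; rewrite chi_bE //.
  by apply/bigcupP; exists p; rewrite // inE cdist_g (leq_ltn_trans (leq_mod _ _)).
have inj : {in chi_b b (row_mx x 0) &, injective g}.
  move=> i1 i2 h1 h2 /(congr1 val) /= e; apply: val_inj.
  have [lt12|lt21|//] := ltngtP i1 i2; exfalso.
    exact: (chi_b_row_mx0_antipodal hbn hgap h1 h2 (modn_eq_ltn2 lt12 (ltn_ord i2) e)).
  exact: (chi_b_row_mx0_antipodal hbn hgap h2 h1 (modn_eq_ltn2 lt21 (ltn_ord i1) (esym e))).
by rewrite /w_b -(card_in_imset inj) subset_leq_card.
Qed.

Lemma hole_run (J H : {set 'I_n}) : is_hole J H ->
  exists (a : 'I_n) (m : nat), [/\ (m < n)%N, (#|H| <= m)%N, [disjoint H & J] &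
    forall k : 'I_n, k \in H <-> (exists2 t, 0 < t <= m & val k = (a + t) %% n)%N].
Proof.
case=> a [h [_ _ _ HE hdis]]; have n_gt0 : (0 < n)%N by apply: leq_ltn_trans (ltn_ord a).
exists a, (minn h (n - 1)).
have inH (k : 'I_n) :
    reflect (exists2 t, 0 < t <= minn h (n - 1) & val k = (a + t) %% n)%N (k \in H).
  rewrite HE inE; apply: (iffP existsP) => [[t /andP [ht /eqP ->]]|[t ht ->]].
    by move: ht (ltn_ord t) => /= ht htn; exists t => //; lia.
  have htn : (t < n)%N by move: ht; lia.
  by exists (Ordinal htn); rewrite /= eqxx andbT; move: ht; lia.
split=> //; [by lia | | by move=> k; split=> /inH].
pose f (t : 'I_(minn h (n - 1))) : 'I_n := Ordinal (ltn_pmod (a + t.+1) n_gt0).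
have sub : H \subset f @: setT.
  apply/subsetP => k /inH [t ht hk]; have htm : (t.-1 < minn h (n - 1))%N by move: ht; lia.
  apply/imsetP; exists (Ordinal htm) => //.
  by apply: val_inj; rewrite /= hk prednK ?(andP ht).1.
rewrite (leq_trans (subset_leq_card sub)) //.
by rewrite (leq_trans (leq_imset_card _ _)) // cardsT card_ord.
Qed.

Lemma hole_wrap_gap b (x : 'rV[F]_n) (H : {set 'I_n}) :
  is_hole (chi_b 1 x) H -> (b - 1 <= #|H|)%N ->
  [exists i in H, (val i == 0) || (val i == n.-1)]%N -> wrap_gap_geq b x.
Proof.
move=> /hole_run [a [m [hmn hcH hdis inH]]] hbH /existsP [y /andP [/inH [t0 ht0 ey] hy]].
move=> p1 p2 hp1 hp2.
have zero t (k : 'I_n) : (0 < t <= m)%N -> val k = ((a + t) %% n)%N -> x 0 k = 0.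
  move=> ht hk; apply/eqP; rewrite -[_ == 0]negbK -in_chi_b1.
  by rewrite (disjointFr hdis) //; apply/inH; exists t.
rewrite leqNgt; apply/negP => gap.
have z1 : ~~ (a < p1 <= a + m)%N.
  apply/negP => hp; move/eqP: hp1; apply; apply: (zero (p1 - a)%N); first by lia.
  by rewrite subnKC ?modn_small //; lia.
have z2 : ~~ (a < p2 + n <= a + m)%N.
  apply/negP => hp; move/eqP: hp2; apply; apply: (zero (p2 + n - a)%N); first by lia.
  by rewrite subnKC ?modnDr ?modn_small //; lia.
move: ey hy (ltn_ord a) (ltn_ord p1) (ltn_ord p2) hmn ht0 hbH hcH gap z1 z2 => /=.
rewrite -subn1; move: (nat_of_ord y) (nat_of_ord a) (nat_of_ord p1) (nat_of_ord p2) #|H|.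
(* Unrolled, the zero run [a + 1, a + m] contains n - 1 or n, so it would have to
   fit strictly between p1 and p2 + n, which are fewer than m apart. *)
clear => y a p1 p2 c ey hy ha hp1 hp2 hmn ht0 hbH hcH gap z1 z2.
rewrite modn_ltn2 in ey; last by lia.
by move: ey; case: ltnP; lia.
Qed.

End WrapAround.

Lemma d_b_pm_code_le (F : finFieldType) n b (C1 C2 : {vspace 'rV[F]_n}) (x : 'rV[F]_n) :
  (2%:R != 0 :> F)%R -> (b <= n)%N -> x \in C1 -> x \in C2 -> x != 0%R ->
  wrap_gap_geq b x -> (d_b b (pm_code C1 C2) <= w_b b x)%N.
Proof.
move=> h2 hbn hx1 hx2 x0 hgap.
have c0E : row_mx (x + x) (x - x) = (2%:R *: row_mx x 0)%R.
  by rewrite subrr scale_row_mx scaler0 scaler_nat mulr2n.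
have hc0 : row_mx (x + x) (x - x) \in pm_code C1 C2.
  by apply/pm_codeP; exists x => //; exists x.
apply: leq_trans (d_b_le b hc0 _) _.
  rewrite c0E scaler_eq0 (negbTE h2) /= -row_mx0.
  by apply: contra_neq x0 => /eq_row_mx [].
by rewrite c0E /w_b chi_bZ // w_b_row_mx0_le.
Qed.

Unset Implicit Arguments.

Theorem mainTheorem13 (F : finFieldType) (n b : nat)
  (C1 C2 : {vspace 'rV[F]_n}) (x : 'rV[F]_n) (H : {set 'I_n}) :
  odd #|F| -> (3 <= n)%N -> (1 <= b)%N -> (b <= n - 2)%N ->
  \dim C1 = (n - 1)%N -> \dim C2 = (n - 1)%N ->
  bsym_MDS b C1 -> bsym_MDS b C2 ->
  x \in C1 -> x \in C2 ->
  is_hole (chi_b 1 x) H ->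
  w_b b x = d_b b C1 ->
  (b - 1 <= #|H|)%N ->
  [exists i in H, (val i == 0)%N || (val i == n.-1)] ->
  \dim (pm_code C1 C2) = (2 * n - 2)%N /\ bsym_AMDS b (pm_code C1 C2)
  /\ d_b b (pm_code C1 C2) = b.+1.
Proof.
(* Only the dimension of C2 matters, not its MDS property. *)
move=> hodd hn3 hb1 hbn hd1 hd2 hMDS1 _ hx1 hx2 hhole hwx hH hbd.
have h2 := two_neq0_oddcard hodd.
have dC1 : d_b b C1 = b.+1 by move: hMDS1; rewrite /bsym_MDS hd1 => ->; lia.
have x0 : x != 0%R.
  case: hhole => a [_ [_ ha _ _ _]].
  by apply: contraTneq ha => ->; rewrite in_chi_b1 mxE eqxx.
have dC : d_b b (pm_code C1 C2) = b.+1.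
  apply/eqP; rewrite eqn_leq pm_code_d_b_gt ?dC1 ?hb1 //=; last by lia.
  rewrite -dC1 -hwx d_b_pm_code_le //; first by lia.
  exact: hole_wrap_gap hhole hH hbd.
have hdim : \dim (pm_code C1 C2) = (2 * n - 2)%N by rewrite dim_pm_code // hd1 hd2; lia.
split=> //; split=> //; rewrite /bsym_AMDS dC hdim.
by have -> : minn (n + n - (2 * n - 2) + b) (n + n) = b.+2 by lia.
Qed.
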